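(* Let $\Sigma$ be a set. The free adequate monoid on $\Sigma$ is isomorphic to the free adequate semigroup on $\Sigma$ with a single adjoined element which is an identity for multiplication and a fixed point for $*$ and $+$.
   Context: For a semigroup $S$ let $S^1=S$ if $S$ is a monoid and otherwise $S$ with an identity adjoined. $a\,\mathcal{L}^*\,b$ iff for all $x,y\in S^1$: $ax=ay\Leftrightarrow bx=by$; $a\,\mathcal{R}^*\,b$ iff for all $x,y\in S^1$: $xa=ya\Leftrightarrow xb=yb$. $S$ is adequate if its idempotents commute and every $\mathcal{L}^*$-class and every $\mathcal{R}^*$-class contains an idempotent (necessarily unique); $x^+$ is the idempotent $\mathcal{R}^*$-related to $x$, $x^*$ the idempotent $\mathcal{L}^*$-related to $x$. Adequate semigroups are $(2,1,1)$-algebras (multiplication, $+$, $*$) and adequate monoids $(2,1,1,0)$-algebras (with the identity as constant); morphisms preserve all these operations. The free adequate semigroup [monoid] on $\Sigma$ is an adequate semigroup [monoid] containing $\Sigma$ such that every map from $\Sigma$ into an adequate semigroup [monoid] extends uniquely to a morphism; isomorphism here is as $(2,1,1,0)$-algebras. *)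

Set Implicit Arguments.
Section Stars.
Variable S : Type.
Variable mul : S -> S -> S.

(* S^1 for a semigroup: S with an identity adjoined, represented as [option S]
   ([None] is the adjoined identity). *)
Definition ract (a : S) (x : option S) : S :=
  match x with None => a | Some x => mul a x end.
Definition lact (x : option S) (a : S) : S :=
  match x with None => a | Some x => mul x a end.

Definition Lstar (a b : S) : Prop :=
  forall x y : option S, ract a x = ract a y <-> ract b x = ract b y.
Definition Rstar (a b : S) : Prop :=
  forall x y : option S, lact x a = lact y a <-> lact x b = lact y b.

Definition idempotent (e : S) : Prop := mul e e = e.

Definition adequate : Prop :=
  (forall e f, idempotent e -> idempotent f -> mul e f = mul f e) /\
  (forall a, exists e, idempotent e /\ Lstar a e) /\
  (forall a, exists e, idempotent e /\ Rstar a e).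

(* Monoid versions: S^1 = S when S is a monoid. *)
Definition LstarM (a b : S) : Prop :=
  forall x y : S, mul a x = mul a y <-> mul b x = mul b y.
Definition RstarM (a b : S) : Prop :=
  forall x y : S, mul x a = mul y a <-> mul x b = mul y b.

Definition adequateM : Prop :=
  (forall e f, idempotent e -> idempotent f -> mul e f = mul f e) /\
  (forall a, exists e, idempotent e /\ LstarM a e) /\
  (forall a, exists e, idempotent e /\ RstarM a e).
End Stars.
Unset Implicit Arguments.

Record adequate_semigroup := AdSg {
  as_car :> Type;
  as_mul : as_car -> as_car -> as_car;
  as_plus : as_car -> as_car;
  as_star : as_car -> as_car;
  as_mulA : forall x y z, as_mul x (as_mul y z) = as_mul (as_mul x y) z;
  as_adequate : adequate as_mul;
  as_plus_idem : forall x, idempotent as_mul (as_plus x);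
  as_plus_R : forall x, Rstar as_mul x (as_plus x);
  as_star_idem : forall x, idempotent as_mul (as_star x);
  as_star_L : forall x, Lstar as_mul x (as_star x)
}.

Record adequate_monoid := AdMon {
  am_car :> Type;
  am_mul : am_car -> am_car -> am_car;
  am_plus : am_car -> am_car;
  am_star : am_car -> am_car;
  am_one : am_car;
  am_mulA : forall x y z, am_mul x (am_mul y z) = am_mul (am_mul x y) z;
  am_mul1l : forall x, am_mul am_one x = x;
  am_mulr1 : forall x, am_mul x am_one = x;
  am_adequate : adequateM am_mul;
  am_plus_idem : forall x, idempotent am_mul (am_plus x);
  am_plus_R : forall x, RstarM am_mul x (am_plus x);
  am_star_idem : forall x, idempotent am_mul (am_star x);
  am_star_L : forall x, LstarM am_mul x (am_star x)
}.

Definition as_morphism (S T : adequate_semigroup) (f : S -> T) : Prop :=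
  (forall x y, f (as_mul S x y) = as_mul T (f x) (f y)) /\
  (forall x, f (as_plus S x) = as_plus T (f x)) /\
  (forall x, f (as_star S x) = as_star T (f x)).

Definition am_morphism (M N : adequate_monoid) (f : M -> N) : Prop :=
  (forall x y, f (am_mul M x y) = am_mul N (f x) (f y)) /\
  (forall x, f (am_plus M x) = am_plus N (f x)) /\
  (forall x, f (am_star M x) = am_star N (f x)) /\
  f (am_one M) = am_one N.

Definition is_free_adequate_semigroup (Sigma : Type)
    (F : adequate_semigroup) (iota : Sigma -> F) : Prop :=
  forall (S : adequate_semigroup) (f : Sigma -> S),
    exists phi : F -> S, as_morphism F S phi /\ (forall a, phi (iota a) = f a) /\
      forall psi : F -> S, as_morphism F S psi ->
        (forall a, psi (iota a) = f a) -> forall x, psi x = phi x.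

Definition is_free_adequate_monoid (Sigma : Type)
    (M : adequate_monoid) (iota : Sigma -> M) : Prop :=
  forall (N : adequate_monoid) (f : Sigma -> N),
    exists phi : M -> N, am_morphism M N phi /\ (forall a, phi (iota a) = f a) /\
      forall psi : M -> N, am_morphism M N psi ->
        (forall a, psi (iota a) = f a) -> forall x, psi x = phi x.

Section Adjoin.
Variable F : adequate_semigroup.
Definition adj_mul (x y : option F) : option F :=
  match x, y with
  | None, _ => y
  | _, None => x
  | Some a, Some b => Some (as_mul F a b)
  end.
Definition adj_plus (x : option F) : option F :=
  match x with None => None | Some a => Some (as_plus F a) end.
Definition adj_star (x : option F) : option F :=
  match x with None => None | Some a => Some (as_star F a) end.
Definition adj_one : option F := None.
End Adjoin.

Definition iso_to_adjoin (M : adequate_monoid) (F : adequate_semigroup)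
    (phi : M -> option F) : Prop :=
  (exists psi : option F -> M,
      (forall x, psi (phi x) = x) /\ (forall y, phi (psi y) = y)) /\
  (forall x y, phi (am_mul M x y) = adj_mul F (phi x) (phi y)) /\
  (forall x, phi (am_plus M x) = adj_plus F (phi x)) /\
  (forall x, phi (am_star M x) = adj_star F (phi x)) /\
  phi (am_one M) = adj_one F.


Set Implicit Arguments.

(* Both algebras are free, so the comparison maps between M and F with an
   identity adjoined compose to endomorphisms fixing the generators, which
   must be identities.  The only work is to see that the two constructions
   involved are adequate: a monoid is an adequate semigroup because in a
   monoid adjoining a new identity does not change L* and R*, and adjoining
   an identity to an adequate semigroup (fixed by + and * ) yields an adequate
   monoid. *)

Section MonoidAsSemigroup.
Variable N : adequate_monoid.

Definition opt_one (x : option N) : N :=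
  match x with None => am_one N | Some x => x end.

Lemma ract_opt_one (a : N) x : ract (am_mul N) a x = am_mul N a (opt_one x).
Proof. destruct x; simpl; [reflexivity | now rewrite am_mulr1]. Qed.

Lemma lact_opt_one (a : N) x : lact (am_mul N) x a = am_mul N (opt_one x) a.
Proof. destruct x; simpl; [reflexivity | now rewrite am_mul1l]. Qed.

Lemma LstarM_Lstar a b : LstarM (am_mul N) a b -> Lstar (am_mul N) a b.
Proof. intros H x y. rewrite !ract_opt_one. apply H. Qed.

Lemma RstarM_Rstar a b : RstarM (am_mul N) a b -> Rstar (am_mul N) a b.
Proof. intros H x y. rewrite !lact_opt_one. apply H. Qed.

Lemma am_adequate_semigroup : adequate (am_mul N).
Proof.
  split; [apply (proj1 (am_adequate N)) | split]; intro a.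
  - exists (am_star N a).
    split; [apply am_star_idem | apply LstarM_Lstar, am_star_L].
  - exists (am_plus N a).
    split; [apply am_plus_idem | apply RstarM_Rstar, am_plus_R].
Qed.

Definition semigroup_of_monoid : adequate_semigroup :=
  AdSg (am_car N) (am_mul N) (am_plus N) (am_star N) (am_mulA N)
    am_adequate_semigroup
    (am_plus_idem N) (fun x => RstarM_Rstar (am_plus_R N x))
    (am_star_idem N) (fun x => LstarM_Lstar (am_star_L N x)).

(* An idempotent R*-related (L*-related) to 1 is fixed by left (right)
   multiplication with 1, hence equals 1. *)
Lemma am_plus_one : am_plus N (am_one N) = am_one N.
Proof.
  pose proof (am_plus_R N (am_one N) (am_plus N (am_one N)) (am_one N)) as H.
  rewrite !am_mulr1, !am_mul1l in H. apply H, am_plus_idem.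
Qed.

Lemma am_star_one : am_star N (am_one N) = am_one N.
Proof.
  pose proof (am_star_L N (am_one N) (am_star N (am_one N)) (am_one N)) as H.
  rewrite !am_mulr1, !am_mul1l in H. apply H, am_star_idem.
Qed.

End MonoidAsSemigroup.

Section AdjoinIdentity.
Variable F : adequate_semigroup.

Lemma adj_mulA x y z :
  adj_mul F x (adj_mul F y z) = adj_mul F (adj_mul F x y) z.
Proof. destruct x, y, z; simpl; try reflexivity. now rewrite as_mulA. Qed.

Lemma adj_mul1l x : adj_mul F (adj_one F) x = x.
Proof. reflexivity. Qed.

Lemma adj_mulr1 x : adj_mul F x (adj_one F) = x.
Proof. destruct x; reflexivity. Qed.

Lemma adj_mul_Somel a x : adj_mul F (Some a) x = Some (ract (as_mul F) a x).
Proof. destruct x; reflexivity. Qed.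

Lemma adj_mul_Somer x a : adj_mul F x (Some a) = Some (lact (as_mul F) x a).
Proof. destruct x; reflexivity. Qed.

Lemma adj_plus_R x : RstarM (adj_mul F) x (adj_plus F x).
Proof.
  destruct x as [a |]; intros u v; [| tauto].
  simpl adj_plus. rewrite !adj_mul_Somer.
  pose proof (as_plus_R F a u v) as H.
  split; intro E; injection E as E; f_equal; apply H, E.
Qed.

Lemma adj_star_L x : LstarM (adj_mul F) x (adj_star F x).
Proof.
  destruct x as [a |]; intros u v; [| tauto].
  simpl adj_star. rewrite !adj_mul_Somel.
  pose proof (as_star_L F a u v) as H.
  split; intro E; injection E as E; f_equal; apply H, E.
Qed.

Lemma adj_plus_idem x : idempotent (adj_mul F) (adj_plus F x).
Proof.
  destruct x; unfold idempotent; simpl; [f_equal; apply as_plus_idem | reflexivity].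
Qed.

Lemma adj_star_idem x : idempotent (adj_mul F) (adj_star F x).
Proof.
  destruct x; unfold idempotent; simpl; [f_equal; apply as_star_idem | reflexivity].
Qed.

Lemma adj_idempotents_commute e f :
  idempotent (adj_mul F) e -> idempotent (adj_mul F) f ->
  adj_mul F e f = adj_mul F f e.
Proof.
  destruct e as [a |], f as [b |]; simpl; try reflexivity.
  unfold idempotent; simpl. intros Ha Hb. injection Ha as Ha. injection Hb as Hb.
  f_equal. apply (proj1 (as_adequate F)); assumption.
Qed.

Lemma adj_adequate : adequateM (adj_mul F).
Proof.
  split; [exact adj_idempotents_commute | split]; intro a.
  - exists (adj_star F a). split; [apply adj_star_idem | apply adj_star_L].
  - exists (adj_plus F a). split; [apply adj_plus_idem | apply adj_plus_R].
Qed.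

Definition adjoin_identity : adequate_monoid :=
  AdMon (option F) (adj_mul F) (adj_plus F) (adj_star F) (adj_one F)
    adj_mulA adj_mul1l adj_mulr1 adj_adequate
    adj_plus_idem adj_plus_R adj_star_idem adj_star_L.

Lemma Some_as_morphism :
  as_morphism F (semigroup_of_monoid adjoin_identity) Some.
Proof. repeat split. Qed.

Definition extend_by_one (N : adequate_monoid) (g : F -> N) (x : option F) : N :=
  match x with None => am_one N | Some a => g a end.

Lemma extend_by_one_am_morphism (N : adequate_monoid) (g : F -> N) :
  as_morphism F (semigroup_of_monoid N) g ->
  am_morphism adjoin_identity N (extend_by_one N g).
Proof.
  intros [Gmul [Gplus Gstar]]. repeat split.
  - intros [a |] [b |]; simpl.
    + apply Gmul.
    + now rewrite am_mulr1.
    + now rewrite am_mul1l.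
    + now rewrite am_mul1l.
  - intros [a |]; simpl; [apply Gplus | symmetry; apply am_plus_one].
  - intros [a |]; simpl; [apply Gstar | symmetry; apply am_star_one].
Qed.

End AdjoinIdentity.

Lemma am_morphism_id (M : adequate_monoid) : am_morphism M M (fun x => x).
Proof. repeat split. Qed.

Lemma am_morphism_comp (M N P : adequate_monoid) (f : M -> N) (g : N -> P) :
  am_morphism M N f -> am_morphism N P g ->
  am_morphism M P (fun x => g (f x)).
Proof.
  intros [Fm [Fp [Fs F1]]] [Gm [Gp [Gs G1]]]. repeat split.
  - intros x y. now rewrite Fm, Gm.
  - intro x. now rewrite Fp, Gp.
  - intro x. now rewrite Fs, Gs.
  - now rewrite F1, G1.
Qed.

Lemma am_morphism_as_morphism (M N : adequate_monoid) (f : M -> N) :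
  am_morphism M N f ->
  as_morphism (semigroup_of_monoid M) (semigroup_of_monoid N) f.
Proof. intros [Fm [Fp [Fs _]]]. repeat split; assumption. Qed.

Lemma as_morphism_id (S : adequate_semigroup) : as_morphism S S (fun x => x).
Proof. repeat split. Qed.

Lemma as_morphism_comp (S T U : adequate_semigroup) (f : S -> T) (g : T -> U) :
  as_morphism S T f -> as_morphism T U g ->
  as_morphism S U (fun x => g (f x)).
Proof.
  intros [Fm [Fp Fs]] [Gm [Gp Gs]]. repeat split.
  - intros x y. now rewrite Fm, Gm.
  - intro x. now rewrite Fp, Gp.
  - intro x. now rewrite Fs, Gs.
Qed.

Lemma free_adequate_monoid_morphism_ext (Sigma : Type)
    (M : adequate_monoid) (iota : Sigma -> M) (N : adequate_monoid) (f g : M -> N) :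
  is_free_adequate_monoid Sigma M iota ->
  am_morphism M N f -> am_morphism M N g ->
  (forall a, f (iota a) = g (iota a)) -> forall x, f x = g x.
Proof.
  intros Hfree Hf Hg Hfg x.
  destruct (Hfree N (fun a => g (iota a))) as [h [_ [_ Huniq]]].
  now rewrite (Huniq f Hf Hfg), (Huniq g Hg (fun _ => eq_refl)).
Qed.

Lemma free_adequate_semigroup_morphism_ext (Sigma : Type)
    (F : adequate_semigroup) (iota : Sigma -> F) (S : adequate_semigroup) (f g : F -> S) :
  is_free_adequate_semigroup Sigma F iota ->
  as_morphism F S f -> as_morphism F S g ->
  (forall a, f (iota a) = g (iota a)) -> forall x, f x = g x.
Proof.
  intros Hfree Hf Hg Hfg x.
  destruct (Hfree S (fun a => g (iota a))) as [h [_ [_ Huniq]]].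
  now rewrite (Huniq f Hf Hfg), (Huniq g Hg (fun _ => eq_refl)).
Qed.

Theorem proposition2p2 (Sigma : Type)
    (M : adequate_monoid) (iotaM : Sigma -> M)
    (F : adequate_semigroup) (iotaF : Sigma -> F) :
  is_free_adequate_monoid Sigma M iotaM ->
  is_free_adequate_semigroup Sigma F iotaF ->
  exists phi : M -> option F, iso_to_adjoin M F phi.
Proof.
  intros HM HF.
  destruct (HM (adjoin_identity F) (fun a => Some (iotaF a)))
    as [phi [Hphi [phi_gen _]]].
  destruct (HF (semigroup_of_monoid M) iotaM) as [g [Hg [g_gen _]]].
  pose (psi := extend_by_one F M g).
  assert (Hpsi : am_morphism (adjoin_identity F) M psi)
    by now apply extend_by_one_am_morphism.
  assert (psi_phi : forall x, psi (phi x) = x).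
  { apply (free_adequate_monoid_morphism_ext HM);
      [apply (am_morphism_comp Hphi Hpsi) | apply am_morphism_id |].
    intro a. rewrite phi_gen. apply g_gen. }
  assert (phi_g : forall a, phi (g a) = Some a).
  { apply (free_adequate_semigroup_morphism_ext
             (S := semigroup_of_monoid (adjoin_identity F))
             (f := fun a => phi (g a)) (g := Some) HF);
      [apply (as_morphism_comp Hg (am_morphism_as_morphism Hphi))
      | apply Some_as_morphism |].
    intro a. simpl. rewrite g_gen. apply phi_gen. }
  exists phi. split.
  - exists psi. split; [exact psi_phi |].
    intros [a |]; [apply phi_g | apply (proj2 (proj2 (proj2 Hphi)))].
  - exact Hphi.
Qed.
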